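(* Let $n\ge2$ and let $0\le x_1(0)\le\cdots\le x_n(0)\le1$ evolve under the static coverage control law. Then each $x_i(t)$ converges as $t\to\infty$ to a limit $\bar x_i$, and the limiting positions achieve optimal coverage: $\Phi(\bar x_1,\dots,\bar x_n,\rho)=\Phi^*$. Moreover, there is an absolute constant $C>0$ (independent of $n,\rho$, the initial positions and $\epsilon$) such that for every $\epsilon\in(0,1]$ and every $t\ge C\,n^2\log\!\big(\frac{n}{\epsilon}\frac{\rho_{\max}}{\rho_{\min}}\big)$, we have $|x_i(t)-\bar x_i|\le\epsilon$ for all $i$.
   Context: Let $\rho:[0,1]\to(0,\infty)$ be piecewise continuous with $\rho_{\min}\le\rho(z)\le\rho_{\max}$ for positive constants $\rho_{\min},\rho_{\max}$. For $a,b\in[0,1]$ let $d_\rho(a,b)=\int_{\min(a,b)}^{\max(a,b)}\rho(z)\,dz$, and $F(x)=\int_0^x\rho(z)\,dz$. The coverage of $x_1,\dots,x_n\in[0,1]$ is $\Phi(x_1,\dots,x_n,\rho)=\max_{y\in[0,1]}\min_i d_\rho(y,x_i)$ and $\Phi^*=\inf_{(x_1,\dots,x_n)\in[0,1]^n}\Phi(x_1,\dots,x_n,\rho)$. For $0\le a\le b\le1$ and $\alpha\ge0$, the $\alpha$-median $m^\alpha_\rho(a,b)$ is the unique $c\in[a,b]$ with $\int_a^c\rho(z)\,dz=\alpha\int_c^b\rho(z)\,dz$, equivalently $F(c)=\frac{F(a)+\alpha F(b)}{1+\alpha}$. The static coverage control law for $n\ge2$ agents is the iteration $x_1(t+1)=m^{1/2}_\rho(0,x_2(t))$,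 $x_i(t+1)=m^{1}_\rho(x_{i-1}(t),x_{i+1}(t))$ for $2\le i\le n-1$, $x_n(t+1)=m^{2}_\rho(x_{n-1}(t),1)$. *)

From Stdlib Require Import Reals Lra Lia List Classical ClassicalEpsilon.
Open Scope R_scope.

(* Riemann integral of f over [a,b] as a plain real number (well defined by
   proof irrelevance of RiemannInt; arbitrary if f is not integrable). *)
Definition Int (f : R -> R) (a b : R) : R :=
  epsilon (inhabits 0)
    (fun v => exists pr : Riemann_integrable f a b, RiemannInt pr = v).

Definition d_rho (rho : R -> R) (a b : R) : R := Int rho (Rmin a b) (Rmax a b).

Definition Fcum (rho : R -> R) (x : R) : R := Int rho 0 x.

Definition piecewise_continuous01 (rho : R -> R) : Prop :=
  exists l : list R,
    (forall x, 0 <= x <= 1 -> ~ In x l ->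
       limit1_in rho (fun y => 0 <= y <= 1) (rho x) x) /\
    (forall p, In p l -> 0 <= p <= 1 ->
       (p < 1 -> exists L, limit1_in rho (fun y => p < y <= 1) L p) /\
       (0 < p -> exists L, limit1_in rho (fun y => 0 <= y < p) L p)).

Fixpoint min_1_to (n : nat) (f : nat -> R) : R :=
  match n with
  | O => 0
  | S O => f 1%nat
  | S m => Rmin (min_1_to m f) (f n)
  end.

(* Coverage Phi(x_1..x_n, rho) = max_{y in [0,1]} min_i d_rho(y, x_i),
   taken as the least upper bound of the values (which is attained). *)
Definition Phi (rho : R -> R) (n : nat) (x : nat -> R) : R :=
  epsilon (inhabits 0)
    (is_lub (fun v => exists y, 0 <= y <= 1 /\
                        v = min_1_to n (fun i => d_rho rho y (x i)))).

Definition Phistar (rho : R -> R) (n : nat) : R :=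
  epsilon (inhabits 0)
    (fun v =>
       (forall x : nat -> R, (forall i, (1 <= i <= n)%nat -> 0 <= x i <= 1) ->
          v <= Phi rho n x) /\
       (forall w, (forall x : nat -> R,
                     (forall i, (1 <= i <= n)%nat -> 0 <= x i <= 1) ->
                     w <= Phi rho n x) -> w <= v)).

Definition amedian (rho : R -> R) (alpha a b : R) : R :=
  epsilon (inhabits 0)
    (fun c => a <= c <= b /\ d_rho rho a c = alpha * d_rho rho c b).

Definition coverage_law (rho : R -> R) (n : nat) (x : nat -> nat -> R) : Prop :=
  forall t : nat,
    x (S t) 1%nat = amedian rho (1/2) 0 (x t 2%nat) /\
    (forall i, (2 <= i <= n - 1)%nat ->
       x (S t) i = amedian rho 1 (x t (i - 1)%nat) (x t (i + 1)%nat)) /\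
    x (S t) n = amedian rho 2 (x t (n - 1)%nat) 1.

From Stdlib Require Import Reals Lra Lia List Classical ClassicalEpsilon
  RList RiemannInt_SF RiemannInt Permutation.
Open Scope R_scope.

(* In the coordinates y_i = F(x_i) the control law is an affine averaging iteration
   y_1 <- y_2 / 3, y_i <- (y_(i-1) + y_(i+1)) / 2, y_n <- (y_(n-1) + 2 F(1)) / 3,
   whose fixed point is the configuration of levels y_i = (2i - 1) F(1) / (2n).  Weighting
   the error at agent i by the concave parabola 4n^2 - (2i - n - 1)^2, which lies in
   [3n^2, 4n^2], turns one step into a contraction by 1 - 1/n^2; hence the error in the
   F-coordinates is at most (4/3) F(1) (1 - 1/n^2)^t, and since rho_min <= F' <= rho_max the
   positions converge at rate (4/3) (rho_max / rho_min) e^(-t/n^2).  The limit has coverage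
   F(1)/(2n), and no configuration does better: of the n + 1 points jF(1)/n, some one is
   at F-distance at least F(1)/(2n) from every agent, by pigeonhole. *)

Lemma Riemann_integrable_ext_open (f g : R -> R) (a b : R) :
  a <= b -> (forall x, a < x < b -> f x = g x) ->
  Riemann_integrable g a b -> Riemann_integrable f a b.
Proof.
  intros Hab Hfg Hg eps.
  destruct (Hg eps) as [phi [[psi [l [l0 Had]]] [Hbound Hsmall]]].
  exists phi.
  (* Enlarge the majorant at the two endpoints only; this leaves its integral unchanged. *)
  set (psi' := fun x => if Req_EM_T x a then Rabs (f a - phi a)
                        else if Req_EM_T x b then Rabs (f b - phi b) else psi x).
  assert (Had' : adapted_couple psi' a b l l0).
  { destruct Had as (Hsorted & Hfirst & Hlast & Hlen & Hconst).
    repeat split; auto.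
    intros i Hi t Ht.
    unfold constant_D_eq, open_interval in *.
    rewrite <- (Hconst i Hi t Ht).
    assert (pos_Rl l 0 <= pos_Rl l i) by (apply (proj1 (RList_P6 l) Hsorted); lia).
    assert (pos_Rl l (S i) <= pos_Rl l (pred (length l)))
      by (apply (proj1 (RList_P6 l) Hsorted); lia).
    rewrite Hfirst, Rmin_left in * by lra. rewrite Hlast, Rmax_right in * by lra.
    unfold psi'. destruct (Req_EM_T t a); [lra|]. destruct (Req_EM_T t b); [lra|]. reflexivity. }
  exists (mkStepFun (existT _ l (existT _ l0 Had'))).
  split; [|exact Hsmall].
  intros t Ht. simpl. unfold psi'.
  rewrite Rmin_left, Rmax_right in Ht by lra.
  destruct (Req_EM_T t a) as [->|]; [lra|].
  destruct (Req_EM_T t b) as [->|]; [lra|].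
  rewrite Hfg by lra. apply Hbound. rewrite Rmin_left, Rmax_right; lra.
Qed.

Definition right_limit (f : R -> R) (a L : R) : Prop :=
  forall eps, 0 < eps -> exists d, 0 < d /\ forall y, a < y < a + d -> Rabs (f y - L) < eps.

Definition left_limit (f : R -> R) (b L : R) : Prop :=
  forall eps, 0 < eps -> exists d, 0 < d /\ forall y, b - d < y < b -> Rabs (f y - L) < eps.

Lemma Riemann_integrable_of_limits (f : R -> R) (a b La Lb : R) :
  a < b -> right_limit f a La -> left_limit f b Lb ->
  (forall x, a < x < b -> continuity_pt f x) ->
  Riemann_integrable f a b.
Proof.
  intros Hab HLa HLb Hcont.
  set (g := fun x => if Rle_dec x a then La else if Rle_dec b x then Lb else f x).
  apply (Riemann_integrable_ext_open f g); [lra| |].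
  { intros x Hx. unfold g. destruct (Rle_dec x a); [lra|]. destruct (Rle_dec b x); [lra|]. auto. }
  apply continuity_implies_RiemannInt; [lra|].
  intros x Hx.
  destruct (Req_dec x a) as [->|Hxa]; [|destruct (Req_dec x b) as [->|Hxb]].
  - intros eps Heps. destruct (HLa eps Heps) as [d [Hd Hy]].
    exists (Rmin d (b - a)). split; [apply Rmin_pos; lra|].
    intros y [_ Hya]. simpl in *. unfold R_dist in *. apply Rabs_def2 in Hya.
    pose proof (Rmin_l d (b - a)). pose proof (Rmin_r d (b - a)).
    unfold g. destruct (Rle_dec a a); [|lra].
    destruct (Rle_dec y a). { rewrite Rminus_diag, Rabs_R0; lra. }
    destruct (Rle_dec b y); [lra|]. apply Hy; lra.
  - intros eps Heps. destruct (HLb eps Heps) as [d [Hd Hy]].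
    exists (Rmin d (b - a)). split; [apply Rmin_pos; lra|].
    intros y [_ Hyb]. simpl in *. unfold R_dist in *. apply Rabs_def2 in Hyb.
    pose proof (Rmin_l d (b - a)). pose proof (Rmin_r d (b - a)).
    unfold g. destruct (Rle_dec b a); [lra|]. destruct (Rle_dec b b); [|lra].
    destruct (Rle_dec y a); [lra|].
    destruct (Rle_dec b y). { rewrite Rminus_diag, Rabs_R0; lra. }
    apply Hy; lra.
  - apply (continuity_pt_locally_ext f g (Rmin (x - a) (b - x))); [apply Rmin_pos; lra| |].
    + intros y Hy. unfold R_dist in Hy. apply Rabs_def2 in Hy.
      pose proof (Rmin_l (x - a) (b - x)). pose proof (Rmin_r (x - a) (b - x)).
      unfold g. destruct (Rle_dec y a); [lra|]. destruct (Rle_dec b y); [lra|]. reflexivity.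
    + apply Hcont. lra.
Qed.

Lemma Riemann_integrable_piecewise (f : R -> R) (l : list R) : forall a b,
  a < b -> (forall x, a < x < b -> ~ In x l -> continuity_pt f x) ->
  (exists L, right_limit f a L) -> (exists L, left_limit f b L) ->
  (forall p, In p l -> a < p < b -> (exists L, right_limit f p L) /\ (exists L, left_limit f p L)) ->
  inhabited (Riemann_integrable f a b).
Proof.
  induction l as [|p l IH]; intros a b Hab Hcont [La HLa] [Lb HLb] Hbreak.
  - constructor. apply (Riemann_integrable_of_limits f a b La Lb); auto.
  - destruct (classic (a < p < b)) as [Hp|Hp].
    + destruct (Hbreak p (in_eq p l) Hp) as [HRp HLp].
      assert (Hcont' : forall x, a < x < b -> x <> p -> ~ In x l -> continuity_pt f x).
      { intros x Hx Hxp Hnot. apply Hcont; [lra|]. intros [->|Hin]; tauto. }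
      assert (Hbreak' : forall q, In q l -> a < q < b ->
                (exists L, right_limit f q L) /\ (exists L, left_limit f q L))
        by (intros q Hq; apply Hbreak; now right).
      assert (Iap : inhabited (Riemann_integrable f a p)).
      { apply IH; [lra | | exists La; auto | auto | ].
        - intros x Hx. apply Hcont'; lra.
        - intros q Hq Hqp. apply Hbreak'; auto; lra. }
      assert (Ipb : inhabited (Riemann_integrable f p b)).
      { apply IH; [lra | | auto | exists Lb; auto | ].
        - intros x Hx. apply Hcont'; lra.
        - intros q Hq Hqp. apply Hbreak'; auto; lra. }
      destruct Iap as [Iap], Ipb as [Ipb].
      constructor. exact (RiemannInt_P24 Iap Ipb).
    + apply (IH a b); [auto | | exists La; auto | exists Lb; auto | ].
      * intros x Hx Hnot. apply Hcont; auto. intros [->|Hin]; tauto.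
      * intros q Hq. apply Hbreak. now right.
Qed.

Lemma limit1_in_right_limit (f : R -> R) (D : R -> Prop) (L p r : R) :
  0 < r -> (forall y, p < y < p + r -> D y) -> limit1_in f D L p -> right_limit f p L.
Proof.
  intros Hr HD Hlim eps Heps.
  destruct (Hlim eps Heps) as [d [Hd Hy]]. simpl in Hy. unfold R_dist in Hy.
  exists (Rmin d r). split; [apply Rmin_pos; lra|].
  intros y Hyp. pose proof (Rmin_l d r). pose proof (Rmin_r d r).
  apply Hy. split; [apply HD; lra|]. rewrite Rabs_right; lra.
Qed.

Lemma limit1_in_left_limit (f : R -> R) (D : R -> Prop) (L p r : R) :
  0 < r -> (forall y, p - r < y < p -> D y) -> limit1_in f D L p -> left_limit f p L.
Proof.
  intros Hr HD Hlim eps Heps.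
  destruct (Hlim eps Heps) as [d [Hd Hy]]. simpl in Hy. unfold R_dist in Hy.
  exists (Rmin d r). split; [apply Rmin_pos; lra|].
  intros y Hyp. pose proof (Rmin_l d r). pose proof (Rmin_r d r).
  apply Hy. split; [apply HD; lra|]. rewrite Rabs_left; lra.
Qed.

Lemma limit1_in_continuity_pt (f : R -> R) (D : R -> Prop) (x r : R) :
  0 < r -> (forall y, Rabs (y - x) < r -> D y) -> limit1_in f D (f x) x -> continuity_pt f x.
Proof.
  intros Hr HD Hlim eps Heps.
  destruct (Hlim eps Heps) as [d [Hd Hy]]. simpl in Hy.
  exists (Rmin d r). split; [apply Rmin_pos; lra|].
  intros y [_ Hyx]. simpl in *. unfold R_dist in *.
  pose proof (Rmin_l d r). pose proof (Rmin_r d r).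
  apply Hy. split; [apply HD|]; lra.
Qed.

Lemma piecewise_continuous01_integrable (rho : R -> R) :
  piecewise_continuous01 rho -> inhabited (Riemann_integrable rho 0 1).
Proof.
  intros [l [Hcont Hbreak]].
  apply (Riemann_integrable_piecewise rho l); [lra | | | | ].
  - intros x Hx Hnot.
    apply (limit1_in_continuity_pt rho (fun y => 0 <= y <= 1) x (Rmin x (1 - x)));
      [apply Rmin_pos; lra | | apply Hcont; auto; lra].
    intros y Hy. apply Rabs_def2 in Hy.
    pose proof (Rmin_l x (1 - x)). pose proof (Rmin_r x (1 - x)). lra.
  - destruct (classic (In 0 l)) as [Hin|Hnot].
    + destruct (proj1 (Hbreak 0 Hin ltac:(lra)) ltac:(lra)) as [L HL].
      exists L. apply (limit1_in_right_limit rho _ L 0 1 ltac:(lra)) in HL; auto. intros; lra.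
    + exists (rho 0). apply (limit1_in_right_limit rho (fun y => 0 <= y <= 1) (rho 0) 0 1);
        [lra | intros; lra | apply Hcont; auto; lra].
  - destruct (classic (In 1 l)) as [Hin|Hnot].
    + destruct (proj2 (Hbreak 1 Hin ltac:(lra)) ltac:(lra)) as [L HL].
      exists L. apply (limit1_in_left_limit rho _ L 1 1 ltac:(lra)) in HL; auto. intros; lra.
    + exists (rho 1). apply (limit1_in_left_limit rho (fun y => 0 <= y <= 1) (rho 1) 1 1);
        [lra | intros; lra | apply Hcont; auto; lra].
  - intros p Hp Hp01. destruct (Hbreak p Hp ltac:(lra)) as [Hr Hl].
    destruct (Hr ltac:(lra)) as [Lr HLr]. destruct (Hl ltac:(lra)) as [Ll HLl].
    split.
    + exists Lr. apply (limit1_in_right_limit rho _ Lr p (1 - p) ltac:(lra)) in HLr; auto. intros; lra.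
    + exists Ll. apply (limit1_in_left_limit rho _ Ll p p ltac:(lra)) in HLl; auto. intros; lra.
Qed.

Definition optimal_level (n : nat) (P : R) (i : nat) : R := (2 * INR i - 1) * P / (2 * INR n).

Lemma optimal_level_range (n : nat) (b : R) (i : nat) : (1 <= i <= n)%nat -> 0 <= b ->
  0 <= optimal_level n b i <= b.
Proof.
  intros Hi Hb. pose proof (le_INR 1 i ltac:(lia)). pose proof (le_INR i n ltac:(lia)).
  simpl in *. unfold optimal_level. split.
  - apply Rmult_le_pos; [nra | left; apply Rinv_0_lt_compat; lra].
  - apply (Rmult_le_reg_r (2 * INR n)); [lra|]. field_simplify; nra.
Qed.

Definition averaging_step (n : nat) (y y' : nat -> R) (b : R) : Prop :=
  y' 1%nat = y 2%nat / 3 /\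
  (forall i, (2 <= i <= n - 1)%nat -> y' i = (y (i - 1)%nat + y (i + 1)%nat) / 2) /\
  y' n = (y (n - 1)%nat + 2 * b) / 3.

Definition weight (N r : R) : R := 4 * N ^ 2 - (2 * r - N - 1) ^ 2.

Definition contraction (N : R) : R := 1 - 1 / N ^ 2.

Lemma weight_le (N r : R) : weight N r <= 4 * N ^ 2.
Proof. unfold weight. pose proof (pow2_ge_0 (2 * r - N - 1)). lra. Qed.

Lemma weight_ge (N r : R) : 1 <= r <= N -> 3 * N ^ 2 <= weight N r.
Proof. intros. unfold weight. nra. Qed.

Lemma weight_sym (N : R) : weight N N = weight N 1.
Proof. unfold weight. ring. Qed.

Lemma contraction_bounds (N : R) : 2 <= N -> 3 / 4 <= contraction N <= 1.
Proof.
  intros HN. unfold contraction.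
  assert (0 < 1 / N ^ 2 <= 1 / 4).
  { split; [apply Rdiv_lt_0_compat; nra|].
    apply (Rmult_le_reg_r (N ^ 2)); [nra|]. field_simplify; nra. }
  lra.
Qed.

Lemma weight_boundary (N r : R) : 2 <= N -> weight N r / 3 <= contraction N * weight N 1.
Proof.
  intros HN. pose proof (weight_le N r). pose proof (weight_ge N 1 ltac:(lra)).
  pose proof (contraction_bounds N HN). nra.
Qed.

(* weight is a concave parabola with second difference -8, hence nearly harmonic. *)
Lemma weight_average (N r : R) : 2 <= N ->
  (weight N (r - 1) + weight N (r + 1)) / 2 <= contraction N * weight N r.
Proof.
  intros HN. pose proof (weight_le N r).
  replace ((weight N (r - 1) + weight N (r + 1)) / 2) with (weight N r - 4) by (unfold weight; field).
  unfold contraction.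
  replace ((1 - 1 / N ^ 2) * weight N r) with (weight N r - weight N r / N ^ 2) by (field; nra).
  assert (weight N r / N ^ 2 <= 4).
  { apply (Rmult_le_reg_r (N ^ 2)); [nra|]. field_simplify; nra. }
  lra.
Qed.

Lemma Rabs_div_pos (a c : R) : 0 < c -> Rabs (a / c) = Rabs a / c.
Proof. intros. unfold Rdiv. rewrite Rabs_mult, Rabs_inv, (Rabs_right c); lra. Qed.

Lemma averaging_step_error (n : nat) (y y' : nat -> R) (b : R) : (2 <= n)%nat ->
  averaging_step n y y' b ->
  averaging_step n (fun i => y i - optimal_level n b i) (fun i => y' i - optimal_level n b i) 0.
Proof.
  intros Hn [E1 [Emid En]].
  assert (HN : 2 <= INR n) by (apply (le_INR 2); lia).
  unfold optimal_level. split; [|split].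
  - rewrite E1. simpl. field. lra.
  - intros i Hi. rewrite (Emid i Hi), minus_INR, plus_INR by lia. simpl. field. lra.
  - rewrite En, minus_INR by lia. simpl. field. lra.
Qed.

Lemma averaging_step_decay (n : nat) (e e' : nat -> R) (K : R) : (2 <= n)%nat -> 0 <= K ->
  averaging_step n e e' 0 ->
  (forall i, (1 <= i <= n)%nat -> Rabs (e i) <= K * weight (INR n) (INR i)) ->
  forall i, (1 <= i <= n)%nat -> Rabs (e' i) <= contraction (INR n) * K * weight (INR n) (INR i).
Proof.
  intros Hn HK [E1 [Emid En]] He i Hi.
  assert (HN : 2 <= INR n) by (apply (le_INR 2); lia).
  destruct (Nat.eq_dec i 1) as [->|Hi1]; [|destruct (Nat.eq_dec i n) as [->|Hin]].
  - rewrite E1, Rabs_div_pos by lra.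
    pose proof (He 2%nat ltac:(lia)). pose proof (weight_boundary (INR n) (INR 2) HN).
    simpl INR in *. nra.
  - rewrite En, Rmult_0_r, Rplus_0_r, Rabs_div_pos by lra.
    pose proof (He (n - 1)%nat ltac:(lia)). pose proof (weight_boundary (INR n) (INR (n - 1)) HN).
    rewrite weight_sym. nra.
  - rewrite (Emid i ltac:(lia)), Rabs_div_pos by lra.
    pose proof (Rabs_triang (e (i - 1)%nat) (e (i + 1)%nat)).
    pose proof (He (i - 1)%nat ltac:(lia)). pose proof (He (i + 1)%nat ltac:(lia)).
    pose proof (weight_average (INR n) (INR i) HN).
    rewrite minus_INR, plus_INR in * by lia. simpl INR in *. nra.
Qed.

Definition nondecreasing_on (n : nat) (z : nat -> R) : Prop :=
  forall i, (1 <= i < n)%nat -> z i <= z (S i).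

Lemma nondecreasing_on_le (n : nat) (z : nat -> R) : nondecreasing_on n z ->
  forall i j, (1 <= i <= j)%nat -> (j <= n)%nat -> z i <= z j.
Proof.
  intros Hz i j Hij Hjn. induction j as [|j IH]; [lia|].
  destruct (Nat.eq_dec i (S j)) as [->|Hne]; [lra|].
  apply Rle_trans with (z j); [apply IH; lia | apply Hz; lia].
Qed.

Lemma averaging_step_nondecreasing (n : nat) (y y' : nat -> R) (b : R) : (2 <= n)%nat ->
  (forall i, (1 <= i <= n)%nat -> 0 <= y i <= b) -> nondecreasing_on n y ->
  averaging_step n y y' b -> nondecreasing_on n y'.
Proof.
  intros Hn Hy Hmono [E1 [Emid En]] i Hi.
  pose proof (nondecreasing_on_le n y Hmono) as Hle.
  pose proof (Hy i ltac:(lia)). pose proof (Hy (S i) ltac:(lia)).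
  destruct (Nat.eq_dec i 1) as [->|Hi1]; [destruct (Nat.eq_dec n 2) as [->|Hn2]|
    destruct (Nat.eq_dec (S i) n) as [Hlast|Hlast]].
  - rewrite E1, En. simpl. lra.
  - rewrite E1, (Emid 2%nat ltac:(lia)). simpl.
    pose proof (Hle 2%nat 3%nat ltac:(lia) ltac:(lia)). lra.
  - rewrite <- Hlast in En. rewrite En, (Emid i ltac:(lia)).
    replace (S i - 1)%nat with i by lia. replace (i + 1)%nat with (S i) by lia.
    pose proof (Hle (i - 1)%nat i ltac:(lia) ltac:(lia)). lra.
  - rewrite (Emid i ltac:(lia)), (Emid (S i) ltac:(lia)). replace (S i - 1)%nat with i by lia.
    pose proof (Hle (i - 1)%nat i ltac:(lia) ltac:(lia)).
    pose proof (Hle (i + 1)%nat (S i + 1)%nat ltac:(lia) ltac:(lia)). lra.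
Qed.

Lemma averaging_error_decay (n : nat) (y : nat -> nat -> R) (b : R) : (2 <= n)%nat -> 0 <= b ->
  (forall i, (1 <= i <= n)%nat -> 0 <= y 0%nat i <= b) ->
  (forall t, averaging_step n (y t) (y (S t)) b) ->
  forall t i, (1 <= i <= n)%nat ->
    Rabs (y t i - optimal_level n b i) <= 4 / 3 * b * contraction (INR n) ^ t.
Proof.
  intros Hn Hb Hy0 Hstep.
  set (N := INR n). assert (HN : 2 <= N) by (apply (le_INR 2); lia).
  pose proof (contraction_bounds N HN) as Hc.
  set (K := b / (3 * N ^ 2)).
  assert (HK : 0 <= K) by (apply Rmult_le_pos; [lra | left; apply Rinv_0_lt_compat; nra]).
  assert (Hweighted : forall t i, (1 <= i <= n)%nat ->
            Rabs (y t i - optimal_level n b i) <= contraction N ^ t * K * weight N (INR i)).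
  { induction t as [|t IH]; intros i Hi.
    - pose proof (Hy0 i Hi). pose proof (optimal_level_range n b i Hi Hb).
      pose proof (weight_ge N (INR i) (conj (le_INR 1 i ltac:(lia)) (le_INR i n ltac:(lia)))).
      simpl. apply Rabs_le.
      assert (b <= K * weight N (INR i)).
      { unfold K. apply (Rmult_le_reg_r (3 * N ^ 2)); [nra|]. field_simplify; nra. }
      lra.
    - simpl.
      replace (contraction N * contraction N ^ t * K) with (contraction N * (contraction N ^ t * K))
        by ring.
      apply (averaging_step_decay n (fun i => y t i - optimal_level n b i)
               (fun i => y (S t) i - optimal_level n b i)); auto.
      + apply Rmult_le_pos; auto. apply pow_le. lra.
      + apply (averaging_step_error n (y t) (y (S t)) b Hn (Hstep t)). }
  intros t i Hi.
  eapply Rle_trans; [apply Hweighted; auto|].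
  pose proof (weight_le N (INR i)). assert (0 <= contraction N ^ t) by (apply pow_le; lra).
  assert (Hsc : K * (4 * N ^ 2) = 4 / 3 * b) by (unfold K; field; nra).
  replace (4 / 3 * b * contraction N ^ t) with (contraction N ^ t * K * (4 * N ^ 2))
    by (rewrite <- Hsc; ring).
  apply Rmult_le_compat_l; auto. apply Rmult_le_pos; auto.
Qed.

Lemma contraction_pow_le (N Q : R) (t : nat) : 2 <= N -> 0 < Q -> N ^ 2 * ln Q <= INR t ->
  contraction N ^ t <= / Q.
Proof.
  intros HN HQ Ht.
  assert (HN2 : 0 < N ^ 2) by nra.
  pose proof (contraction_bounds N HN).
  apply Rle_trans with (exp (- (1 / N ^ 2)) ^ t).
  { apply pow_incr. split; [lra|]. pose proof (exp_ineq1_le (- (1 / N ^ 2))).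
    unfold contraction. lra. }
  rewrite <- Rpower_pow by apply exp_pos. unfold Rpower. rewrite ln_exp.
  rewrite <- (exp_ln Q HQ), <- exp_Ropp.
  assert (Hexp : INR t * - (1 / N ^ 2) <= - ln Q).
  { apply (Rmult_le_reg_r (N ^ 2)); [lra|]. field_simplify; lra. }
  destruct Hexp as [Hlt | ->]; [left; now apply exp_increasing | lra].
Qed.

Lemma INR_bracket (n : nat) (s : R) : (1 <= n)%nat -> 0 <= s <= INR n ->
  exists i, (1 <= i <= n)%nat /\ INR i - 1 <= s <= INR i.
Proof.
  induction n as [|[|n] IH]; intros Hn Hs; [lia | |].
  - exists 1%nat. split; [lia|]. simpl in *. lra.
  - destruct (Rle_dec s (INR (S n))).
    + destruct (IH ltac:(lia) ltac:(lra)) as [i [Hi Hsi]]. exists i. split; [lia | auto].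
    + exists (S (S n)). split; [lia|]. rewrite (S_INR (S n)) in *. lra.
Qed.

Lemma grid_point_far (n : nat) (P : R) (y : nat -> R) : (1 <= n)%nat -> 0 < P ->
  exists j, (j <= n)%nat /\
    forall i, (1 <= i <= n)%nat -> P / (2 * INR n) <= Rabs (INR j * P / INR n - y i).
Proof.
  intros Hn HP.
  assert (Hrn : 1 <= INR n) by (apply (le_INR 1); lia).
  set (near j i := Rabs (INR j * P / INR n - y i) < P / (2 * INR n)).
  destruct (classic (exists j, (j <= n)%nat /\
      forall i, (1 <= i <= n)%nat -> P / (2 * INR n) <= Rabs (INR j * P / INR n - y i)))
    as [|Hnone]; [assumption | exfalso].
  (* The n + 1 grid points are P/n apart, so no agent is near two of them. *)
  assert (Hcover : Forall (fun j => Exists (near j) (seq 1 n)) (seq 0 (S n))).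
  { apply Forall_forall. intros j Hj. apply in_seq in Hj. apply Exists_exists.
    apply NNPP. intros Hno. apply Hnone. exists j. split; [lia|].
    intros i Hi. apply Rnot_lt_le. intros Hlt. apply Hno.
    exists i. split; [apply in_seq; lia | exact Hlt]. }
  destruct (Permutation_pigeonhole_rel near Hcover)
    as [j [k [l [Hperm [i [_ [Hj Hk]]]]]]].
  { rewrite !length_seq. lia. }
  assert (Hjk : j <> k).
  { pose proof (Permutation_NoDup Hperm (seq_NoDup _ _)) as Hnd.
    inversion Hnd as [|? ? Hnotin]. intros ->. apply Hnotin. now left. }
  assert (Hgap : 1 <= Rabs (INR j - INR k)).
  { destruct (Nat.lt_ge_cases j k) as [Hlt|Hge].
    - apply (le_INR (S j)) in Hlt. rewrite S_INR in Hlt. rewrite Rabs_left1; lra.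
    - assert (Hlt : (k < j)%nat) by lia. apply (le_INR (S k)) in Hlt. rewrite S_INR in Hlt.
      rewrite Rabs_right; lra. }
  unfold near in Hj, Hk.
  assert (Hd : Rabs (INR j * P / INR n - INR k * P / INR n) < P / INR n).
  { replace (INR j * P / INR n - INR k * P / INR n)
      with ((INR j * P / INR n - y i) + - (INR k * P / INR n - y i)) by ring.
    eapply Rle_lt_trans; [apply Rabs_triang|]. rewrite Rabs_Ropp.
    replace (P / INR n) with (P / (2 * INR n) + P / (2 * INR n)) by (field; lra). lra. }
  replace (INR j * P / INR n - INR k * P / INR n) with ((INR j - INR k) * (P / INR n)) in Hd
    by (field; lra).
  assert (Hstep : 0 < P / INR n) by (apply Rdiv_lt_0_compat; lra).
  rewrite Rabs_mult, (Rabs_right (P / INR n)) in Hd by lra.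
  apply (Rmult_le_compat_r (P / INR n)) in Hgap; lra.
Qed.

Lemma min_1_to_le (n : nat) (f : nat -> R) (i : nat) : (1 <= i <= n)%nat -> min_1_to n f <= f i.
Proof.
  induction n as [|[|n] IH]; intros Hi; [lia | |].
  - replace i with 1%nat by lia. simpl. lra.
  - change (min_1_to (S (S n)) f) with (Rmin (min_1_to (S n) f) (f (S (S n)))).
    destruct (Nat.eq_dec i (S (S n))) as [->|Hne]; [apply Rmin_r|].
    eapply Rle_trans; [apply Rmin_l | apply IH; lia].
Qed.

Lemma min_1_to_glb (n : nat) (f : nat -> R) (c : R) :
  (1 <= n)%nat -> (forall i, (1 <= i <= n)%nat -> c <= f i) -> c <= min_1_to n f.
Proof.
  induction n as [|[|n] IH]; intros Hn H; [lia | simpl; apply H; lia |].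
  change (min_1_to (S (S n)) f) with (Rmin (min_1_to (S n) f) (f (S (S n)))).
  apply Rmin_glb; [apply IH; [lia | intros; apply H; lia] | apply H; lia].
Qed.

Definition clamp01 (x : R) : R := Rmax 0 (Rmin x 1).

Lemma clamp01_range (x : R) : 0 <= clamp01 x <= 1.
Proof. unfold clamp01, Rmax, Rmin. repeat destruct Rle_dec; lra. Qed.

Lemma clamp01_id (x : R) : 0 <= x <= 1 -> clamp01 x = x.
Proof. intros. unfold clamp01. rewrite Rmin_left, Rmax_right; lra. Qed.

Lemma clamp01_contraction (x y : R) : Rabs (clamp01 x - clamp01 y) <= Rabs (x - y).
Proof.
  unfold clamp01, Rmax, Rmin. repeat destruct Rle_dec; unfold Rabs; repeat destruct Rcase_abs; lra.
Qed.

Definition ordered_config (n : nat) (z : nat -> R) : Prop :=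
  (forall i, (1 <= i <= n)%nat -> 0 <= z i <= 1) /\ nondecreasing_on n z.

Definition optimal_config (rho : R -> R) (n i : nat) : R :=
  epsilon (inhabits 0) (fun c => 0 <= c <= 1 /\ Fcum rho c = optimal_level n (Fcum rho 1) i).

Section Density.

Variable rho : R -> R.
Variables rmin rmax : R.
Hypothesis rho_integrable : inhabited (Riemann_integrable rho 0 1).
Hypothesis rmin_pos : 0 < rmin.
Hypothesis rho_bounds : forall z, 0 <= z <= 1 -> rmin <= rho z <= rmax.

Lemma Int_RiemannInt (a b : R) : 0 <= a -> a <= b -> b <= 1 ->
  exists pr : Riemann_integrable rho a b, Int rho a b = RiemannInt pr.
Proof.
  intros Ha Hab Hb. destruct rho_integrable as [I01].
  pose proof (RiemannInt_P23 (RiemannInt_P22 I01 (conj (Rle_trans _ _ _ Ha Hab) Hb)) (conj Ha Hab))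
    as Iab.
  exists Iab. unfold Int.
  assert (Hex : exists v, exists pr : Riemann_integrable rho a b, RiemannInt pr = v)
    by (exists (RiemannInt Iab), Iab; reflexivity).
  destruct (epsilon_spec (inhabits 0) _ Hex) as [pr <-].
  apply RiemannInt_P5.
Qed.

Lemma Int_Chasles (a b c : R) : 0 <= a -> a <= b -> b <= c -> c <= 1 ->
  Int rho a b + Int rho b c = Int rho a c.
Proof.
  intros Ha Hab Hbc Hc.
  destruct (Int_RiemannInt a b) as [pab ->]; try lra.
  destruct (Int_RiemannInt b c) as [pbc ->]; try lra.
  destruct (Int_RiemannInt a c) as [pac ->]; try lra.
  apply RiemannInt_P26.
Qed.

Lemma Int_bounds (a b : R) : 0 <= a -> a <= b -> b <= 1 ->
  rmin * (b - a) <= Int rho a b <= rmax * (b - a).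
Proof.
  intros Ha Hab Hb. destruct (Int_RiemannInt a b) as [pab ->]; try lra.
  apply RiemannInt_const_bound; auto.
  intros x Hx. apply rho_bounds. lra.
Qed.

Lemma Int_Fcum (a b : R) : 0 <= a -> a <= b -> b <= 1 -> Int rho a b = Fcum rho b - Fcum rho a.
Proof. intros Ha Hab Hb. unfold Fcum. rewrite <- (Int_Chasles 0 a b); lra. Qed.

Lemma Fcum_0 : Fcum rho 0 = 0.
Proof. pose proof (Int_bounds 0 0). unfold Fcum. nra. Qed.

Lemma Fcum_increment_bounds (a b : R) : 0 <= a -> a <= b -> b <= 1 ->
  rmin * (b - a) <= Fcum rho b - Fcum rho a <= rmax * (b - a).
Proof. intros. rewrite <- Int_Fcum by lra. now apply Int_bounds. Qed.

Lemma Fcum_le (a b : R) : 0 <= a -> a <= b -> b <= 1 -> Fcum rho a <= Fcum rho b.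
Proof. intros. pose proof (Fcum_increment_bounds a b). nra. Qed.

Lemma Fcum_le_inv (a b : R) : 0 <= a <= 1 -> 0 <= b <= 1 -> Fcum rho a <= Fcum rho b -> a <= b.
Proof.
  intros Ha Hb H. destruct (Rle_lt_dec a b) as [|Hba]; auto.
  pose proof (Fcum_increment_bounds b a). nra.
Qed.

Lemma Fcum_dist (a b : R) : 0 <= a <= 1 -> 0 <= b <= 1 ->
  rmin * Rabs (a - b) <= Rabs (Fcum rho a - Fcum rho b) <= rmax * Rabs (a - b).
Proof.
  intros Ha Hb. destruct (Rle_lt_dec a b).
  - pose proof (Fcum_increment_bounds a b).
    rewrite (Rabs_left1 (a - b)), Rabs_left1 by nra. nra.
  - pose proof (Fcum_increment_bounds b a).
    rewrite (Rabs_right (a - b)), Rabs_right by nra. nra.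
Qed.

Lemma Fcum_range (y : R) : 0 <= y <= 1 -> 0 <= Fcum rho y <= Fcum rho 1.
Proof. intros. rewrite <- Fcum_0. split; apply Fcum_le; lra. Qed.

Lemma Fcum_1_bounds : rmin <= Fcum rho 1 <= rmax.
Proof. pose proof (Fcum_increment_bounds 0 1). rewrite Fcum_0 in *. lra. Qed.

Lemma d_rho_Fcum (y x : R) : 0 <= y <= 1 -> 0 <= x <= 1 ->
  d_rho rho y x = Rabs (Fcum rho y - Fcum rho x).
Proof.
  intros Hy Hx. unfold d_rho. destruct (Rle_lt_dec y x).
  - rewrite Rmin_left, Rmax_right, Int_Fcum by lra.
    pose proof (Fcum_le y x). rewrite Rabs_left1; lra.
  - rewrite Rmin_right, Rmax_left, Int_Fcum by lra.
    pose proof (Fcum_le x y). rewrite Rabs_right; lra.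
Qed.

Lemma Fcum_ivt (a b v : R) : 0 <= a -> a <= b -> b <= 1 -> Fcum rho a <= v <= Fcum rho b ->
  exists c, a <= c <= b /\ Fcum rho c = v.
Proof.
  intros Ha Hab Hb Hv.
  (* Fcum is meaningless outside [0, 1]; clamping yields a function continuous on all of R,
     as IVT_cor requires. *)
  set (h := fun x => Fcum rho (clamp01 x) - v).
  assert (Hrmax : 0 < rmax) by (pose proof (rho_bounds 0); lra).
  assert (Hh : continuity h).
  { intros x eps Heps. exists (eps / rmax). split; [apply Rdiv_lt_0_compat; lra|].
    intros y [_ Hyx]. simpl in *. unfold R_dist in *. unfold h.
    replace (Fcum rho (clamp01 y) - v - (Fcum rho (clamp01 x) - v))
      with (Fcum rho (clamp01 y) - Fcum rho (clamp01 x)) by ring.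
    pose proof (Fcum_dist (clamp01 y) (clamp01 x) (clamp01_range y) (clamp01_range x)).
    pose proof (clamp01_contraction y x).
    assert (rmax * Rabs (y - x) < eps).
    { apply (Rmult_lt_compat_l rmax) in Hyx; auto.
      replace (rmax * (eps / rmax)) with eps in Hyx by (field; lra). exact Hyx. }
    nra. }
  destruct (IVT_cor h a b Hh Hab) as [c [Hc Hhc]].
  { unfold h. rewrite !clamp01_id by lra. nra. }
  exists c. split; auto. unfold h in Hhc. rewrite clamp01_id in Hhc; lra.
Qed.

Lemma amedian_Fcum (alpha a b : R) : 0 <= a -> a <= b -> b <= 1 -> 0 <= alpha ->
  a <= amedian rho alpha a b <= b /\
  Fcum rho (amedian rho alpha a b) = (Fcum rho a + alpha * Fcum rho b) / (1 + alpha).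
Proof.
  intros Ha Hab Hb Halpha.
  assert (Hd : forall c, a <= c <= b ->
            d_rho rho a c = Fcum rho c - Fcum rho a /\ d_rho rho c b = Fcum rho b - Fcum rho c).
  { intros c Hc. rewrite !d_rho_Fcum by lra.
    pose proof (Fcum_le a c). pose proof (Fcum_le c b).
    rewrite !Rabs_left1 by lra. split; ring. }
  set (v := (Fcum rho a + alpha * Fcum rho b) / (1 + alpha)).
  assert (Hex : exists c, a <= c <= b /\ d_rho rho a c = alpha * d_rho rho c b).
  { destruct (Fcum_ivt a b v) as [c [Hc Hfc]]; auto.
    { pose proof (Fcum_le a b). unfold v.
      split; apply (Rmult_le_reg_r (1 + alpha)); try lra; field_simplify; nra. }
    exists c. split; auto. destruct (Hd c Hc) as [-> ->]. rewrite Hfc. unfold v. field. lra. }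
  destruct (epsilon_spec (inhabits 0) _ Hex) as [Hc Hmed].
  fold (amedian rho alpha a b) in Hc, Hmed.
  split; auto.
  destruct (Hd _ Hc) as [E1 E2]. rewrite E1, E2 in Hmed.
  assert (E : Fcum rho (amedian rho alpha a b) * (1 + alpha) = Fcum rho a + alpha * Fcum rho b)
    by lra.
  unfold v. rewrite <- E. field. lra.
Qed.

Lemma Phi_is_lub (n : nat) (x : nat -> R) : (1 <= n)%nat ->
  (forall i, (1 <= i <= n)%nat -> 0 <= x i <= 1) ->
  is_lub (fun v => exists y, 0 <= y <= 1 /\ v = min_1_to n (fun i => d_rho rho y (x i)))
         (Phi rho n x).
Proof.
  intros Hn Hx. unfold Phi. apply epsilon_spec.
  destruct (completeness (fun v => exists y, 0 <= y <= 1 /\ v = min_1_to n (fun i => d_rho rho y (x i))))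
    as [l Hl]; [| | exists l; exact Hl].
  - exists rmax. intros v [y [Hy ->]].
    eapply Rle_trans; [apply (min_1_to_le n _ 1%nat); lia|].
    pose proof (Hx 1%nat ltac:(lia)).
    rewrite d_rho_Fcum by auto.
    pose proof (Fcum_dist y (x 1%nat) Hy ltac:(auto)).
    assert (Rabs (y - x 1%nat) <= 1) by (apply Rabs_le; lra).
    pose proof (rho_bounds 0). nra.
  - exists (min_1_to n (fun i => d_rho rho 0 (x i))), 0. split; [lra | reflexivity].
Qed.

Lemma Phi_ge (n : nat) (x : nat -> R) : (1 <= n)%nat ->
  (forall i, (1 <= i <= n)%nat -> 0 <= x i <= 1) ->
  Fcum rho 1 / (2 * INR n) <= Phi rho n x.
Proof.
  intros Hn Hx.
  pose proof Fcum_1_bounds as HP.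
  assert (Hrn : 1 <= INR n) by (apply (le_INR 1); lia).
  destruct (grid_point_far n (Fcum rho 1) (fun i => Fcum rho (x i)) Hn ltac:(lra))
    as [j [Hj Hfar]].
  assert (Hu : 0 <= INR j * Fcum rho 1 / INR n <= Fcum rho 1).
  { apply le_INR in Hj. pose proof (pos_INR j). split.
    - apply Rmult_le_pos; [nra | left; apply Rinv_0_lt_compat; lra].
    - apply (Rmult_le_reg_r (INR n)); [lra|]. field_simplify; nra. }
  destruct (Fcum_ivt 0 1 (INR j * Fcum rho 1 / INR n)) as [y [Hy Hfy]]; try lra.
  { rewrite Fcum_0. exact Hu. }
  apply Rle_trans with (min_1_to n (fun i => d_rho rho y (x i))).
  - apply min_1_to_glb; auto. intros i Hi. rewrite d_rho_Fcum, Hfy by auto. now apply Hfar.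
  - apply (Phi_is_lub n x Hn Hx). exists y. auto.
Qed.

Lemma Phi_optimal_le (n : nat) (xb : nat -> R) : (1 <= n)%nat ->
  (forall i, (1 <= i <= n)%nat ->
     0 <= xb i <= 1 /\ Fcum rho (xb i) = optimal_level n (Fcum rho 1) i) ->
  Phi rho n xb <= Fcum rho 1 / (2 * INR n).
Proof.
  intros Hn Hxb.
  apply (Phi_is_lub n xb Hn (fun i Hi => proj1 (Hxb i Hi))). intros v [y [Hy ->]].
  pose proof Fcum_1_bounds as HP.
  assert (Hrn : 1 <= INR n) by (apply (le_INR 1); lia).
  set (P := Fcum rho 1) in *. set (u := Fcum rho y).
  assert (Hu : 0 <= u <= P) by (apply Fcum_range; auto).
  (* The nearest optimal level to u is the one of the cell [(i-1)P/n, iP/n] containing it *)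
  destruct (INR_bracket n (u * INR n / P) Hn) as [i [Hi Hcell]].
  { split.
    - apply Rmult_le_pos; [nra | left; apply Rinv_0_lt_compat; lra].
    - apply (Rmult_le_reg_r P); [lra|]. field_simplify; nra. }
  eapply Rle_trans; [apply (min_1_to_le n _ i Hi)|].
  destruct (Hxb i Hi) as [Hxi Hlevel].
  rewrite d_rho_Fcum, Hlevel by auto. fold u P.
  assert (Hscale : u * INR n / P * P = u * INR n) by (field; lra).
  assert (Hlo : (INR i - 1) * P <= u * INR n).
  { rewrite <- Hscale. apply Rmult_le_compat_r; lra. }
  assert (Hhi : u * INR n <= INR i * P).
  { rewrite <- Hscale. apply Rmult_le_compat_r; lra. }
  unfold optimal_level.
  replace (u - (2 * INR i - 1) * P / (2 * INR n))
    with ((2 * (u * INR n) - (2 * INR i - 1) * P) * / (2 * INR n)) by (field; lra).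
  assert (Hinv : 0 <= / (2 * INR n)) by (left; apply Rinv_0_lt_compat; lra).
  apply Rabs_le. unfold Rdiv. rewrite Ropp_mult_distr_l.
  split; apply Rmult_le_compat_r; lra.
Qed.

Lemma Phi_optimal_eq_Phistar (n : nat) (xb : nat -> R) : (1 <= n)%nat ->
  (forall i, (1 <= i <= n)%nat ->
     0 <= xb i <= 1 /\ Fcum rho (xb i) = optimal_level n (Fcum rho 1) i) ->
  Phi rho n xb = Phistar rho n.
Proof.
  intros Hn Hxb.
  assert (Hmin : forall x, (forall i, (1 <= i <= n)%nat -> 0 <= x i <= 1) -> Phi rho n xb <= Phi rho n x).
  { intros x Hx. pose proof (Phi_optimal_le n xb Hn Hxb). pose proof (Phi_ge n x Hn Hx). lra. }
  assert (Hxb01 : forall i, (1 <= i <= n)%nat -> 0 <= xb i <= 1) by (intros; apply Hxb; auto).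
  unfold Phistar.
  destruct (epsilon_spec (inhabits 0) (fun v =>
      (forall x : nat -> R, (forall i, (1 <= i <= n)%nat -> 0 <= x i <= 1) -> v <= Phi rho n x) /\
      (forall w, (forall x : nat -> R, (forall i, (1 <= i <= n)%nat -> 0 <= x i <= 1) ->
                     w <= Phi rho n x) -> w <= v)))
    as [Hlow Hgreatest].
  { exists (Phi rho n xb). split; auto. }
  apply Rle_antisym; [apply Hgreatest, Hmin | apply Hlow, Hxb01].
Qed.

Lemma optimal_config_spec (n i : nat) : (1 <= i <= n)%nat ->
  0 <= optimal_config rho n i <= 1 /\ Fcum rho (optimal_config rho n i) = optimal_level n (Fcum rho 1) i.
Proof.
  intros Hi. unfold optimal_config. apply epsilon_spec.
  pose proof Fcum_1_bounds.
  destruct (Fcum_ivt 0 1 (optimal_level n (Fcum rho 1) i)) as [c Hc]; [lra | lra | lra | | now exists c].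
  rewrite Fcum_0. apply optimal_level_range; auto. lra.
Qed.

Lemma coverage_step (n : nat) (x : nat -> nat -> R) (t : nat) : (2 <= n)%nat ->
  coverage_law rho n x -> ordered_config n (x t) ->
  averaging_step n (fun i => Fcum rho (x t i)) (fun i => Fcum rho (x (S t) i)) (Fcum rho 1) /\
  ordered_config n (x (S t)).
Proof.
  intros Hn Hlaw [Hrange Hmono].
  destruct (Hlaw t) as [Hfirst [Hmid Hlast]].
  pose proof (nondecreasing_on_le n (x t) Hmono) as Hle.
  destruct (amedian_Fcum (1 / 2) 0 (x t 2%nat)) as [Hpos1 HF1];
    [lra | apply Hrange; lia | apply Hrange; lia | lra |].
  destruct (amedian_Fcum 2 (x t (n - 1)%nat) 1) as [Hposn HFn];
    [apply Hrange; lia | apply Hrange; lia | lra | lra |].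
  rewrite <- Hfirst in Hpos1, HF1. rewrite <- Hlast in Hposn, HFn.
  assert (Hmid' : forall i, (2 <= i <= n - 1)%nat ->
    x t (i - 1)%nat <= x (S t) i <= x t (i + 1)%nat /\
    Fcum rho (x (S t) i) = (Fcum rho (x t (i - 1)%nat) + Fcum rho (x t (i + 1)%nat)) / 2).
  { intros i Hi. rewrite (Hmid i Hi).
    destruct (amedian_Fcum 1 (x t (i - 1)%nat) (x t (i + 1)%nat)) as [Hpos HF];
      [apply Hrange; lia | apply Hle; lia | apply Hrange; lia | lra |].
    split; auto. rewrite HF. field. }
  assert (Hstep : averaging_step n (fun i => Fcum rho (x t i)) (fun i => Fcum rho (x (S t) i))
                    (Fcum rho 1)).
  { split; [|split].
    - rewrite HF1, Fcum_0. field.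
    - intros i Hi. apply Hmid'; auto.
    - rewrite HFn. field. }
  assert (Hrange' : forall i, (1 <= i <= n)%nat -> 0 <= x (S t) i <= 1).
  { intros i Hi.
    destruct (Nat.eq_dec i 1) as [->|]; [pose proof (Hrange 2%nat ltac:(lia)); lra|].
    destruct (Nat.eq_dec i n) as [->|]; [pose proof (Hrange (n - 1)%nat ltac:(lia)); lra|].
    destruct (Hmid' i ltac:(lia)) as [Hpos _].
    pose proof (Hrange (i - 1)%nat ltac:(lia)). pose proof (Hrange (i + 1)%nat ltac:(lia)). lra. }
  split; [exact Hstep | split; [exact Hrange'|]].
  intros i Hi. apply Fcum_le_inv; [apply Hrange'; lia | apply Hrange'; lia |].
  refine (averaging_step_nondecreasing n _ _ _ Hn _ _ Hstep i Hi).
  - intros j Hj. apply Fcum_range, Hrange, Hj.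
  - intros j Hj. apply Fcum_le; [apply Hrange; lia | apply Hmono, Hj | apply Hrange; lia].
Qed.

Lemma coverage_error_bound (n : nat) (x : nat -> nat -> R) : (2 <= n)%nat ->
  coverage_law rho n x -> ordered_config n (x 0%nat) ->
  forall t i, (1 <= i <= n)%nat ->
    Rabs (x t i - optimal_config rho n i) <= 4 / 3 * (rmax / rmin) * contraction (INR n) ^ t.
Proof.
  intros Hn Hlaw H0.
  assert (Hord : forall t, ordered_config n (x t))
    by (induction t; [exact H0 | apply (coverage_step n x t Hn Hlaw IHt)]).
  pose proof Fcum_1_bounds as HP.
  assert (HFerr := averaging_error_decay n (fun t i => Fcum rho (x t i)) (Fcum rho 1) Hn
           ltac:(lra) (fun i Hi => Fcum_range _ (proj1 (Hord 0%nat) i Hi))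
           (fun t => proj1 (coverage_step n x t Hn Hlaw (Hord t)))).
  intros t i Hi.
  destruct (optimal_config_spec n i Hi) as [Hxb HFxb].
  specialize (HFerr t i Hi). simpl in HFerr. rewrite <- HFxb in HFerr.
  pose proof (Fcum_dist (x t i) (optimal_config rho n i) (proj1 (Hord t) i Hi) Hxb).
  assert (HN : 2 <= INR n) by (apply (le_INR 2); lia).
  pose proof (contraction_bounds (INR n) HN).
  assert (0 <= contraction (INR n) ^ t) by (apply pow_le; lra).
  apply (Rmult_le_reg_l rmin); auto.
  replace (rmin * (4 / 3 * (rmax / rmin) * contraction (INR n) ^ t))
    with (4 / 3 * rmax * contraction (INR n) ^ t) by (field; lra).
  apply Rle_trans with (4 / 3 * Fcum rho 1 * contraction (INR n) ^ t); [lra|].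
  apply Rmult_le_compat_r; lra.
Qed.

End Density.

Lemma Un_cv_of_rate (u : nat -> R) (l : R) (T : R -> R) :
  (forall eps, 0 < eps <= 1 -> forall t : nat, INR t >= T eps -> Rabs (u t - l) <= eps) ->
  Un_cv u l.
Proof.
  intros Hrate eps Heps.
  set (e := Rmin (eps / 2) 1).
  assert (He : 0 < e <= 1) by (split; [apply Rmin_pos; lra | apply Rmin_r]).
  destruct (INR_unbounded (T e)) as [N HN].
  exists N. intros t Ht. unfold R_dist.
  apply Rle_lt_trans with e; [apply Hrate; auto; apply le_INR in Ht; lra|].
  pose proof (Rmin_l (eps / 2) 1). unfold e. lra.
Qed.

Lemma coverage_rate (n : nat) (ratio eps : R) (t : nat) : (2 <= n)%nat -> 0 < ratio -> 0 < eps ->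
  INR n ^ 2 * ln (INR n / eps * ratio) <= INR t ->
  4 / 3 * ratio * contraction (INR n) ^ t <= eps.
Proof.
  intros Hn Hratio Heps Ht.
  assert (HN : 2 <= INR n) by (apply (le_INR 2); lia).
  assert (HQ : 0 < INR n / eps * ratio)
    by (apply Rmult_lt_0_compat; [apply Rdiv_lt_0_compat|]; lra).
  pose proof (contraction_pow_le (INR n) _ t HN HQ Ht).
  apply Rle_trans with (4 / 3 * ratio * / (INR n / eps * ratio)); [apply Rmult_le_compat_l; lra|].
  replace (4 / 3 * ratio * / (INR n / eps * ratio)) with (4 / 3 * eps / INR n) by (field; lra).
  apply (Rmult_le_reg_r (INR n)); [lra|]. field_simplify; nra.
Qed.

Theorem theorem1 :
  exists C : R, 0 < C /\
  forall (n : nat) (rho : R -> R) (rho_min rho_max : R) (x : nat -> nat -> R),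
    (2 <= n)%nat ->
    0 < rho_min -> 0 < rho_max ->
    (forall z, 0 <= z <= 1 -> rho_min <= rho z <= rho_max) ->
    piecewise_continuous01 rho ->
    0 <= x 0%nat 1%nat ->
    (forall i, (1 <= i < n)%nat -> x 0%nat i <= x 0%nat (S i)) ->
    x 0%nat n <= 1 ->
    coverage_law rho n x ->
    exists xbar : nat -> R,
      (forall i, (1 <= i <= n)%nat -> Un_cv (fun t => x t i) (xbar i)) /\
      Phi rho n xbar = Phistar rho n /\
      (forall eps : R, 0 < eps <= 1 ->
         forall t : nat,
           INR t >= C * (INR n) ^ 2 * ln (INR n / eps * (rho_max / rho_min)) ->
           forall i, (1 <= i <= n)%nat -> Rabs (x t i - xbar i) <= eps).
Proof.
  exists 1. split; [lra|].
  intros n rho rmin rmax x Hn Hmin Hmax Hbounds Hpc Hfirst Hmono Hlast Hlaw.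
  pose proof (piecewise_continuous01_integrable rho Hpc) as Hint.
  assert (H0 : ordered_config n (x 0%nat)).
  { split; [|exact Hmono]. intros i Hi. pose proof (nondecreasing_on_le n _ Hmono) as Hle.
    pose proof (Hle 1%nat i ltac:(lia) ltac:(lia)). pose proof (Hle i n ltac:(lia) ltac:(lia)). lra. }
  assert (Hratio : 0 < rmax / rmin) by (apply Rdiv_lt_0_compat; lra).
  assert (Hrate : forall eps, 0 < eps <= 1 -> forall t : nat,
            INR t >= 1 * INR n ^ 2 * ln (INR n / eps * (rmax / rmin)) ->
            forall i, (1 <= i <= n)%nat -> Rabs (x t i - optimal_config rho n i) <= eps).
  { intros eps Heps t Ht i Hi.
    eapply Rle_trans; [apply (coverage_error_bound rho rmin rmax); auto|].
    apply coverage_rate; auto; lra. }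
  exists (optimal_config rho n). split; [|split; [|exact Hrate]].
  - intros i Hi.
    apply (Un_cv_of_rate _ _ (fun eps => 1 * INR n ^ 2 * ln (INR n / eps * (rmax / rmin)))).
    intros eps Heps t Ht. now apply Hrate.
  - apply (Phi_optimal_eq_Phistar rho rmin rmax); auto; [lia|].
    intros i Hi. now apply (optimal_config_spec rho rmin rmax).
Qed.
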